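(* Let $f:\mathbb{R}\to(0,\infty)$ be $C^4$, unimodal with maximum at $0$, of the form $f=e^{-H}$ with $H$ regularly varying (there is $\alpha>0$ with $H(tx)/H(t)\to x^\alpha$ as $|t|\to\infty$ for all $x>0$), and with $|(\log f)''''|<M$ for some $M>0$. Suppose there exists $\gamma>0$ such that $|\mathrm{Var}_{g_\beta}(Y^2)-2|=\mathcal{O}(\beta^{-\gamma})$ as $\beta\to\infty$, where $g_\beta(y)\propto f^\beta\big(y/\sqrt{-\beta h''(0)}\big)$ is a probability density. Then, as $\beta\to\infty$, $$\frac{1}{4\beta}R(\beta)=\mathcal{O}(\beta^{-k}),$$ where in general $k=5/2$, but if $h'''(0)=0$ then $k=3$.
   Context: $h=\log f$, $k(x)=xh'(x)$, $r(x)=x^2h''(x)$; $\mathbb{E}_\beta$ denotes expectation under $f^\beta/\int f^\beta$; $R(\beta)=\mathbb{E}_\beta[r(X)-k(X)]$. *)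

From Stdlib Require Import Reals.
From Coquelicot Require Import Coquelicot.
Open Scope R_scope.

Definition C4 (f : R -> R) : Prop :=
  (forall (n : nat) (x : R), (n <= 4)%nat -> ex_derive_n f n x) /\
  (forall x : R, continuous (Derive_n f 4) x).

Definition unimodal_at0 (f : R -> R) : Prop :=
  (forall x y : R, x <= y <= 0 -> f x <= f y) /\
  (forall x y : R, 0 <= x <= y -> f y <= f x).

Definition regularly_varying (H : R -> R) (alpha : R) : Prop :=
  forall x : R, 0 < x ->
    is_lim (fun t => H (t * x) / H t) p_infty (Rpower x alpha) /\
    is_lim (fun t => H (t * x) / H t) m_infty (Rpower x alpha).

Definition int_R (g : R -> R) : R :=
  RInt_gen g (Rbar_locally m_infty) (Rbar_locally p_infty).

Definition Ebeta (f : R -> R) (beta : R) (phi : R -> R) : R :=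
  int_R (fun x => phi x * Rpower (f x) beta) / int_R (fun x => Rpower (f x) beta).

Definition hlog (f : R -> R) : R -> R := fun x => ln (f x).

(* R(beta) = E_beta[r(X) - k(X)],  k(x) = x h'(x), r(x) = x^2 h''(x) *)
Definition Rfun (f : R -> R) (beta : R) : R :=
  Ebeta f beta (fun x => x ^ 2 * Derive_n (hlog f) 2 x - x * Derive_n (hlog f) 1 x).

Definition gscale (f : R -> R) (beta : R) : R :=
  sqrt (- beta * Derive_n (hlog f) 2 0).

Definition Eg (f : R -> R) (beta : R) (phi : R -> R) : R :=
  int_R (fun y => phi y * Rpower (f (y / gscale f beta)) beta) /
  int_R (fun y => Rpower (f (y / gscale f beta)) beta).

Definition VarY2 (f : R -> R) (beta : R) : R :=
  Eg f beta (fun y => y ^ 4) - (Eg f beta (fun y => y ^ 2)) ^ 2.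

Definition bigO_infty (u v : R -> R) : Prop :=
  exists C beta0 : R, forall beta : R, beta0 <= beta -> Rabs (u beta) <= C * Rabs (v beta).

From Stdlib Require Import Reals Lra Lia Classical_Pred_Type.
From Coquelicot Require Import Coquelicot.
Open Scope R_scope.

(* Write [f ^ beta = exp (beta h(0)) exp (beta (h - h(0)))] with [h = log f].  As [h'(0) = 0]
   and [|h''''| < M], Taylor's formula bounds the integrand of [R] by
   [2 (|h'''(0)| |x|^3 + M x^4)], so it suffices that [|x|^3] and [x^4] have moments of order
   [beta^(-3/2)] and [beta^(-2)] under [f ^ beta].  Near [0], [h - h(0)] lies between two
   negative quadratics.  Regular variation makes [-h(2t)] exceed [-h(t)] by a fixed amount for
   large [|t|], so [exp (b h)] decays faster than [|x|^(-6)] for some fixed [b]; with unimodality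
   this yields the uniform bound [(1 + beta x^2)^3 exp (beta (h - h(0))) <= K].  Comparing with
   the Lorentzian [1 / (1 + beta x^2)] bounds the numerator of [R(beta)] by [beta^(-1/2)] times
   those moment orders, while the quadratic lower bound near [0] bounds the normalising integral
   below by a multiple of [beta^(-1/2)]. *)

Fixpoint derivable_upto (n : nat) (u : R -> R) : Prop :=
  match n with
  | O => True
  | S m => (forall x, ex_derive u x) /\ derivable_upto m (Derive u)
  end.

Lemma derivable_upto_ext n : forall u v : R -> R,
  (forall x, u x = v x) -> derivable_upto n u -> derivable_upto n v.
Proof.
  induction n as [|n IH]; simpl; auto.
  intros u v E [Du Cu]; split.
  - intros x; apply (ex_derive_ext u); auto.
  - apply (IH (Derive u)); auto; intros x; apply Derive_ext; auto.
Qed.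

Lemma derivable_upto_S n : forall u, derivable_upto (S n) u -> derivable_upto n u.
Proof.
  induction n as [|n IH]; simpl; auto.
  intros u [Du Cu]; split; auto.
Qed.

Lemma derivable_upto_const n : forall c, derivable_upto n (fun _ => c).
Proof.
  induction n as [|n IH]; simpl; auto.
  intros c; split.
  - intros x; apply ex_derive_const.
  - apply (derivable_upto_ext n (fun _ => 0)); auto.
    intros x; rewrite Derive_const; auto.
Qed.

Lemma derivable_upto_plus n : forall u v,
  derivable_upto n u -> derivable_upto n v -> derivable_upto n (fun x => u x + v x).
Proof.
  induction n as [|n IH]; simpl; auto.
  intros u v [Du Cu] [Dv Cv]; split.
  - intros x; apply (ex_derive_plus u v); auto.
  - apply (derivable_upto_ext n (fun x => Derive u x + Derive v x)); auto.
    intros x; rewrite Derive_plus; auto.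
Qed.

Lemma derivable_upto_mult n : forall u v,
  derivable_upto n u -> derivable_upto n v -> derivable_upto n (fun x => u x * v x).
Proof.
  induction n as [|n IH]; simpl; auto.
  intros u v [Du Cu] [Dv Cv]; split.
  - intros x; apply (ex_derive_mult u v); auto.
  - apply (derivable_upto_ext n (fun x => Derive u x * v x + u x * Derive v x)).
    + intros x; rewrite Derive_mult; auto.
    + apply derivable_upto_plus; apply IH; auto;
        apply derivable_upto_S; simpl; auto.
Qed.

Lemma derivable_upto_inv n : forall u,
  (forall x, u x <> 0) -> derivable_upto n u -> derivable_upto n (fun x => / u x).
Proof.
  induction n as [|n IH]; simpl; auto.
  intros u Hu [Du Cu]; split.
  - intros x; apply (ex_derive_inv u); auto.
  - apply (derivable_upto_ext n (fun x => (- 1 * Derive u x) * (/ u x * / u x))).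
    + intros x; rewrite Derive_inv; auto; field; auto.
    + assert (Cinv : derivable_upto n (fun x => / u x))
        by (apply IH; auto; apply derivable_upto_S; simpl; auto).
      apply derivable_upto_mult; apply derivable_upto_mult; auto using derivable_upto_const.
Qed.

Lemma derivable_upto_ln n u :
  (forall x, 0 < u x) -> derivable_upto (S n) u -> derivable_upto (S n) (fun x => ln (u x)).
Proof.
  intros Hu [Du Cu]; split.
  - intros x; apply (ex_derive_comp ln u); auto.
    eexists; apply is_derive_ln; auto.
  - apply (derivable_upto_ext n (fun x => Derive u x * / u x)).
    + intros x; symmetry; apply is_derive_unique.
      exact (is_derive_comp ln u x _ _ (is_derive_ln _ (Hu x)) (Derive_correct _ _ (Du x))).
    + apply derivable_upto_mult; auto.
      apply derivable_upto_inv; [intros x; specialize (Hu x); lra|].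
      apply derivable_upto_S; simpl; auto.
Qed.

Lemma Derive_n_S (u : R -> R) k x : Derive_n u (S k) x = Derive_n (Derive u) k x.
Proof. rewrite <- Nat.add_1_r, <- (Derive_n_comp u k 1); reflexivity. Qed.

Lemma derivable_upto_of_ex_derive_n n : forall u,
  (forall k x, (k <= n)%nat -> ex_derive_n u k x) -> derivable_upto n u.
Proof.
  induction n as [|n IH]; simpl; auto.
  intros u H; split.
  - intros x; apply (H 1%nat x); lia.
  - apply IH; intros [|k] x Hk; simpl; auto.
    apply (ex_derive_ext (Derive_n u (S k))).
    + intros t; apply Derive_n_S.
    + apply (H (S (S k)) x); lia.
Qed.

Lemma derivable_upto_is_derive_n n : forall u k x, derivable_upto n u -> (k < n)%nat ->
  is_derive (Derive_n u k) x (Derive_n u (S k) x).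
Proof.
  induction n as [|n IH]; intros u k x Cu Hk; [lia|].
  destruct Cu as [Du Cu], k as [|k].
  - apply Derive_correct, Du.
  - rewrite Derive_n_S; apply (is_derive_ext (Derive_n (Derive u) k)).
    + intros t; rewrite Derive_n_S; reflexivity.
    + apply IH; auto; lia.
Qed.

Lemma derivable_upto_hlog f : (forall x, 0 < f x) -> C4 f -> derivable_upto 4 (hlog f).
Proof.
  intros f_pos [f_der _]; apply derivable_upto_ln; auto.
  apply derivable_upto_of_ex_derive_n; auto.
Qed.

(** * Integrals over the real line *)

Lemma ex_RInt_continuous_R (g : R -> R) a b : (forall x, continuous g x) -> ex_RInt g a b.
Proof. intros Cg; apply (ex_RInt_continuous (V := R_CompleteNormedModule)); auto. Qed.

Lemma RInt_le_RInt_subinterval (g : R -> R) a0 b0 a b :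
  (forall x, 0 <= g x) -> (forall x, continuous g x) ->
  a <= a0 -> a0 <= b0 -> b0 <= b -> RInt g a0 b0 <= RInt g a b.
Proof.
  intros Pg Cg H1 H2 H3.
  rewrite <- (RInt_Chasles g a a0 b), <- (RInt_Chasles g a0 b0 b)
    by (apply ex_RInt_continuous_R; auto).
  assert (0 <= RInt g a a0) by (apply RInt_ge_0; auto; apply ex_RInt_continuous_R; auto).
  assert (0 <= RInt g b0 b) by (apply RInt_ge_0; auto; apply ex_RInt_continuous_R; auto).
  change plus with Rplus; lra.
Qed.

(* The limit is the supremum of the integrals over bounded intervals. *)
Lemma int_R_nonneg (g : R -> R) (B : R) :
  (forall x, 0 <= g x) -> (forall x, continuous g x) ->
  (forall a b, a <= b -> RInt g a b <= B) ->
  is_RInt_gen g (Rbar_locally m_infty) (Rbar_locally p_infty) (int_R g) /\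
  int_R g <= B /\ (forall a b, a <= b -> RInt g a b <= int_R g).
Proof.
  intros Pg Cg HB.
  set (E := fun y => exists a b, a <= b /\ y = RInt g a b).
  destruct (completeness E) as [L [HL1 HL2]].
  { exists B; intros y (a & b & Hab & ->); auto. }
  { exists (RInt g 0 0), 0, 0; split; auto; lra. }
  assert (Hub : forall a b, a <= b -> RInt g a b <= L)
    by (intros a b Hab; apply HL1; exists a, b; auto).
  assert (HL : is_RInt_gen g (Rbar_locally m_infty) (Rbar_locally p_infty) L).
  { intros P [eps Heps].
    assert (Hex : exists a0 b0, a0 <= b0 /\ L - eps < RInt g a0 b0).
    { apply not_all_not_ex; intros Hn.
      assert (L <= L - eps); [|destruct eps; simpl in *; lra].
      apply HL2; intros y (a & b & Hab & ->).
      apply Rnot_lt_le; intros Hc; apply (Hn a); exists b; auto. }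
    destruct Hex as (a0 & b0 & Hab0 & Hlt).
    exists (fun a => a < a0) (fun b => b0 < b); [exists a0; auto|exists b0; auto|].
    intros a b Ha Hb; exists (RInt g a b); split.
    - exact (RInt_correct (V := R_CompleteNormedModule) g a b (ex_RInt_continuous_R g a b Cg)).
    - apply Heps.
      assert (RInt g a0 b0 <= RInt g a b) by (apply RInt_le_RInt_subinterval; auto; lra).
      assert (RInt g a b <= L) by (apply Hub; lra).
      change (Rabs (RInt g a b - L) < eps); apply Rabs_def1; lra. }
  assert (EL : int_R g = L) by (apply is_RInt_gen_unique; auto).
  rewrite EL; repeat split; auto.
  apply HL2; intros y (a & b & Hab & ->); auto.
Qed.

(* Both [G] and [G + g] are nonnegative, and [int_R (G + g) <= 2 * int_R G]. *)
Lemma Rabs_int_R_le (g G : R -> R) (B : R) :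
  (forall x, continuous g x) -> (forall x, continuous G x) ->
  (forall x, Rabs (g x) <= G x) -> (forall a b, a <= b -> RInt G a b <= B) ->
  Rabs (int_R g) <= B.
Proof.
  intros Cg CG Hd HB.
  assert (Hg : forall x, - G x <= g x <= G x) by (intros x; apply Rabs_le_between, Hd).
  assert (CGg : forall x, continuous (fun x => G x + g x) x)
    by (intros x; apply (continuous_plus G g); auto).
  destruct (int_R_nonneg G B) as (IG & LG & HG); auto.
  { intros x; specialize (Hg x); lra. }
  destruct (int_R_nonneg (fun x => G x + g x) (2 * int_R G)) as (IGg & LGg & HGg); auto.
  { intros x; specialize (Hg x); lra. }
  { intros a b Hab.
    apply Rle_trans with (RInt (fun x => G x + G x) a b).
    - apply RInt_le; auto; try (apply ex_RInt_continuous_R; auto).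
      + intros x; apply (continuous_plus G G); auto.
      + intros x _; specialize (Hg x); lra.
    - pose proof (RInt_plus (V := R_CompleteNormedModule) G G a b) as E.
      change plus with Rplus in E; rewrite E by (apply ex_RInt_continuous_R; auto).
      specialize (HG a b Hab); lra. }
  assert (Ig : is_RInt_gen g (Rbar_locally m_infty) (Rbar_locally p_infty)
                 (int_R (fun x => G x + g x) - int_R G)).
  { eapply is_RInt_gen_ext; [|exact (is_RInt_gen_minus _ _ _ _ IGg IG)].
    exists (fun _ => True) (fun _ => True); try (exists 0; auto).
    intros a b _ _ x _; unfold minus, plus, opp; simpl; ring. }
  unfold int_R at 1; rewrite (is_RInt_gen_unique _ _ Ig).
  specialize (HG 0 0 (Rle_refl 0)); specialize (HGg 0 0 (Rle_refl 0)).
  rewrite RInt_point in HG, HGg; change zero with 0 in HG, HGg.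
  apply Rabs_le; lra.
Qed.

Lemma RInt_lorentzian_le (A beta a b : R) : 0 < beta -> 0 <= A -> a <= b ->
  RInt (fun x => A / (1 + beta * x ^ 2)) a b <= A * PI / sqrt beta.
Proof.
  intros Hb HA Hab.
  set (s := sqrt beta).
  assert (Hs : 0 < s) by (apply sqrt_lt_R0; auto).
  assert (Hs2 : s * s = beta) by (apply sqrt_sqrt; lra).
  assert (Hpos : forall x, 0 < 1 + s * s * x ^ 2) by (intros x; pose proof (pow2_ge_0 x); nra).
  assert (Hprim : forall x, is_derive (fun x => A * atan (s * x) / s) x (A / (1 + beta * x ^ 2))).
  { intros x; rewrite <- Hs2; auto_derive; auto.
    specialize (Hpos x); field; split; lra. }
  assert (Hcont : forall x, continuous (fun x => A / (1 + beta * x ^ 2)) x).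
  { intros x; apply (ex_derive_continuous (K := R_AbsRing) (V := R_NormedModule)).
    rewrite <- Hs2; auto_derive; specialize (Hpos x); lra. }
  rewrite (is_RInt_unique _ _ _ _
             (is_RInt_derive _ _ a b (fun x _ => Hprim x) (fun x _ => Hcont x))).
  unfold minus, plus, opp; simpl; fold s.
  pose proof (atan_bound (s * a)); pose proof (atan_bound (s * b)).
  apply Rmult_le_reg_r with s; auto.
  field_simplify; try lra; nra.
Qed.

Lemma MVT_at0 (g dg : R -> R) x : (forall t, is_derive g t (dg t)) ->
  exists c, Rabs c <= Rabs x /\ 0 <= c * x /\ g x - g 0 = dg c * x.
Proof.
  intros Hd.
  destruct (MVT_gen g 0 x dg) as [c [Hc E]]; auto.
  { intros t _; apply continuity_pt_filterlim.
    apply (ex_derive_continuous (K := R_AbsRing) (V := R_NormedModule)); exists (dg t); auto. }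
  exists c; rewrite Rminus_0_r in E; unfold Rmin, Rmax in Hc.
  destruct (Rle_dec 0 x).
  - rewrite !Rabs_right; repeat split; auto; nra.
  - rewrite !Rabs_left1; repeat split; auto; nra.
Qed.

Lemma Rabs_sub_at0_le (g dg : R -> R) x B : (forall t, is_derive g t (dg t)) ->
  (forall t, Rabs t <= Rabs x -> Rabs (dg t) <= B) -> Rabs (g x - g 0) <= B * Rabs x.
Proof.
  intros Hd HB; destruct (MVT_at0 g dg x Hd) as (c & Hc & _ & ->).
  rewrite Rabs_mult; apply Rmult_le_compat_r; auto using Rabs_pos.
Qed.

(* Two mean value steps give [k x - k 0 = k''(eta) * (xi * x)] with [0 <= xi * x]. *)
Lemma le_at0_of_second_derivative_nonpos (k dk ddk : R -> R) x :
  (forall t, is_derive k t (dk t)) -> (forall t, is_derive dk t (ddk t)) -> dk 0 = 0 ->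
  (forall t, Rabs t <= Rabs x -> ddk t <= 0) -> k x <= k 0.
Proof.
  intros Dk Ddk Hdk0 Hneg.
  destruct (MVT_at0 k dk x Dk) as (xi & Hxi & Hxix & Ek).
  destruct (MVT_at0 dk ddk xi Ddk) as (eta & Heta & _ & Edk).
  rewrite Hdk0, Rminus_0_r in Edk.
  specialize (Hneg eta (Rle_trans _ _ _ Heta Hxi)).
  assert (ddk eta * (xi * x) <= 0) by nra.
  rewrite Edk in Ek; nra.
Qed.

Lemma quadratic_bounds_at0 (g dg ddg : R -> R) m1 m2 delta :
  (forall t, is_derive g t (dg t)) -> (forall t, is_derive dg t (ddg t)) -> dg 0 = 0 ->
  (forall t, Rabs t <= delta -> m1 <= ddg t <= m2) ->
  forall x, Rabs x <= delta -> m1 / 2 * x ^ 2 <= g x - g 0 <= m2 / 2 * x ^ 2.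
Proof.
  intros Dg Ddg Hdg0 Hm x Hx.
  assert (Hmx : forall t, Rabs t <= Rabs x -> m1 <= ddg t <= m2)
    by (intros t Ht; apply Hm; lra).
  assert (Dsq : forall m t, is_derive (fun t => m / 2 * t ^ 2) t (m * t))
    by (intros m t; auto_derive; auto; field).
  assert (Dlin : forall m t, is_derive (fun t => m * t) t m)
    by (intros m t; auto_derive; auto; ring).
  split.
  - enough (m1 / 2 * x ^ 2 - g x <= m1 / 2 * 0 ^ 2 - g 0) by lra.
    apply (le_at0_of_second_derivative_nonpos (fun t => m1 / 2 * t ^ 2 - g t)
             (fun t => m1 * t - dg t) (fun t => m1 - ddg t)).
    + intros t; exact (is_derive_minus _ g t _ _ (Dsq m1 t) (Dg t)).
    + intros t; exact (is_derive_minus _ dg t _ _ (Dlin m1 t) (Ddg t)).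
    + rewrite Hdg0; ring.
    + intros t Ht; specialize (Hmx t Ht); lra.
  - enough (g x - m2 / 2 * x ^ 2 <= g 0 - m2 / 2 * 0 ^ 2) by lra.
    apply (le_at0_of_second_derivative_nonpos (fun t => g t - m2 / 2 * t ^ 2)
             (fun t => dg t - m2 * t) (fun t => ddg t - m2)).
    + intros t; exact (is_derive_minus g _ t _ _ (Dg t) (Dsq m2 t)).
    + intros t; exact (is_derive_minus dg _ t _ _ (Ddg t) (Dlin m2 t)).
    + rewrite Hdg0; ring.
    + intros t Ht; specialize (Hmx t Ht); lra.
Qed.

Lemma is_derive_at_max_eq0 (h : R -> R) l :
  (forall x, h x <= h 0) -> is_derive h 0 l -> l = 0.
Proof.
  intros Hm Hd; apply is_derive_Reals in Hd.
  exact (deriv_maximum h (-1) 1 0 (exist _ l Hd) ltac:(lra) ltac:(lra) (fun x _ _ => Hm x)).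
Qed.

Section LogDensityDerivatives.

Variables (h : R -> R) (M : R).
Hypothesis h_derivable : derivable_upto 4 h.
Hypothesis h4_bound : forall x, Rabs (Derive_n h 4 x) < M.

Lemma h_is_derive k t : (k < 4)%nat -> is_derive (Derive_n h k) t (Derive_n h (S k) t).
Proof. intros Hk; exact (derivable_upto_is_derive_n 4 h k t h_derivable Hk). Qed.

Lemma h4_bound_pos : 0 < M.
Proof. specialize (h4_bound 0); pose proof (Rabs_pos (Derive_n h 4 0)); lra. Qed.

Lemma Rabs_Derive_n3_le t : Rabs (Derive_n h 3 t) <= Rabs (Derive_n h 3 0) + M * Rabs t.
Proof.
  assert (H := Rabs_sub_at0_le (Derive_n h 3) (Derive_n h 4) t M
                 (fun s => h_is_derive 3 s ltac:(lia)) (fun s _ => Rlt_le _ _ (h4_bound s))).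
  pose proof (Rabs_triang_inv (Derive_n h 3 t) (Derive_n h 3 0)); lra.
Qed.

Lemma Rabs_Derive_n2_sub_le t :
  Rabs (Derive_n h 2 t - Derive_n h 2 0) <= (Rabs (Derive_n h 3 0) + M * Rabs t) * Rabs t.
Proof.
  apply (Rabs_sub_at0_le _ (Derive_n h 3)); [intros s; apply h_is_derive; lia|].
  intros s Hs; eapply Rle_trans; [apply Rabs_Derive_n3_le|].
  pose proof h4_bound_pos; apply Rplus_le_compat_l, Rmult_le_compat_l; lra.
Qed.

Hypothesis h1_0 : Derive_n h 1 0 = 0.

(* Subtracting the quadratic Taylor polynomial, both terms are cubic remainders:
   [x^2 h''(x) - x h'(x) = x^2 (h''(x) - h''(0)) - x (h'(x) - h''(0) x)]. *)
Lemma Rabs_Rfun_integrand_le x :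
  Rabs (x ^ 2 * Derive_n h 2 x - x * Derive_n h 1 x) <=
  2 * (Rabs (Derive_n h 3 0) * Rabs x ^ 3 + M * x ^ 4).
Proof.
  set (c3 := Rabs (Derive_n h 3 0)); set (ax := Rabs x); set (d20 := Derive_n h 2 0).
  assert (HM := h4_bound_pos).
  assert (0 <= c3) by apply Rabs_pos; assert (0 <= ax) by apply Rabs_pos.
  assert (Hr2 := Rabs_Derive_n2_sub_le x); fold c3 ax d20 in Hr2.
  assert (Hr1 : Rabs (Derive_n h 1 x - d20 * x) <= (c3 + M * ax) * ax * ax).
  { replace (Derive_n h 1 x - d20 * x) with
      ((Derive_n h 1 x - d20 * x) - (Derive_n h 1 0 - d20 * 0)) by (rewrite h1_0; ring).
    apply (Rabs_sub_at0_le (fun t => Derive_n h 1 t - d20 * t) (fun t => Derive_n h 2 t - d20)).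
    - intros t; apply (is_derive_minus (Derive_n h 1) (fun t => d20 * t)).
      + apply h_is_derive; lia.
      + auto_derive; auto; ring.
    - intros t Ht; eapply Rle_trans; [apply Rabs_Derive_n2_sub_le|].
      fold ax in Ht; pose proof (Rabs_pos t).
      assert (Rabs t * Rabs t <= ax * ax) by (apply Rmult_le_compat; auto).
      assert (M * (Rabs t * Rabs t) <= M * (ax * ax)) by (apply Rmult_le_compat_l; lra).
      fold c3; nra. }
  replace (x ^ 2 * Derive_n h 2 x - x * Derive_n h 1 x) with
    (x ^ 2 * (Derive_n h 2 x - d20) - x * (Derive_n h 1 x - d20 * x)) by ring.
  assert (Ex2 : x ^ 2 = ax ^ 2) by (unfold ax; rewrite pow2_abs; auto).
  assert (Ex4 : x ^ 4 = ax ^ 4)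
    by (replace 4%nat with (2 * 2)%nat by lia; rewrite !pow_mult, Ex2; auto).
  eapply Rle_trans; [apply Rabs_triang|].
  rewrite Rabs_Ropp, !Rabs_mult, (Rabs_pos_eq (x ^ 2)) by apply pow2_ge_0.
  rewrite Ex2, Ex4; fold ax.
  set (u := Rabs (Derive_n h 2 x - d20)) in *; set (v := Rabs (Derive_n h 1 x - d20 * x)) in *.
  assert (ax ^ 2 * u <= ax ^ 2 * ((c3 + M * ax) * ax))
    by (apply Rmult_le_compat_l; auto; apply pow_le; auto).
  assert (ax * v <= ax * ((c3 + M * ax) * ax * ax)) by (apply Rmult_le_compat_l; auto).
  nra.
Qed.

Lemma h_quadratic_near0 : Derive_n h 2 0 < 0 ->
  exists delta a C, 0 < delta /\ 0 < a /\ 0 < C /\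
    forall x, Rabs x <= delta -> - C * x ^ 2 <= h x - h 0 <= - a * x ^ 2.
Proof.
  intros H20.
  set (A := - Derive_n h 2 0); set (c3 := Rabs (Derive_n h 3 0)).
  assert (HM := h4_bound_pos); assert (0 <= c3) by apply Rabs_pos.
  set (delta := Rmin 1 (A / (2 * (c3 + M)))).
  assert (Hd1 : delta <= 1) by apply Rmin_l.
  assert (Hd2 : (c3 + M) * delta <= A / 2).
  { apply Rle_trans with ((c3 + M) * (A / (2 * (c3 + M)))).
    - apply Rmult_le_compat_l; [lra|apply Rmin_r].
    - right; field; lra. }
  assert (Hdp : 0 < delta) by (apply Rmin_glb_lt; [lra|apply Rdiv_lt_0_compat; unfold A; lra]).
  assert (Hh2 : forall t, Rabs t <= delta -> - 3 * A / 2 <= Derive_n h 2 t <= - A / 2).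
  { intros t Ht; pose proof (Rabs_Derive_n2_sub_le t) as B; fold c3 in B.
    assert ((c3 + M * Rabs t) * Rabs t <= (c3 + M) * delta)
      by (pose proof (Rabs_pos t); apply Rmult_le_compat; nra).
    apply Rabs_le_between in B; unfold A in *; lra. }
  exists delta, (A / 4), (3 * A / 4); split; [lra|]; split; [unfold A; lra|].
  split; [unfold A; lra|]; intros x Hx.
  destruct (quadratic_bounds_at0 h (Derive_n h 1) (Derive_n h 2) _ _ delta
              (fun t => h_is_derive 0 t ltac:(lia)) (fun t => h_is_derive 1 t ltac:(lia))
              h1_0 Hh2 x Hx); split; lra.
Qed.

End LogDensityDerivatives.

(** * Tails from regular variation *)

Lemma exp_le_exp_of_le x y : x <= y -> exp x <= exp y.
Proof. intros [H|H]; [left; apply exp_increasing; auto|subst; lra]. Qed.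

Section DoublingTail.

Variable G : R -> R.
Hypothesis G_nondecr : forall x y, 0 <= x <= y -> G x <= G y.

Lemma doubling_gap l : 1 < l -> is_lim (fun t => G (t * 2) / G t) p_infty l ->
  exists T d, 1 <= T /\ 0 < d /\ forall t, T <= t -> G t + d <= G (t * 2).
Proof.
  intros Hl Hlim; apply is_lim_spec in Hlim.
  destruct (Hlim (mkposreal ((l - 1) / 2) ltac:(lra))) as [T0 HT0]; simpl in HT0.
  set (T := Rmax (T0 + 1) 1); set (r := (1 + l) / 2).
  assert (HT1 : 1 <= T) by apply Rmax_r; assert (HT2 : T0 + 1 <= T) by apply Rmax_l.
  (* [G t = 0] is excluded because then the ratio is [0 / 0 = 0], far from [l]. *)
  assert (Hgrow : forall t, T <= t -> 0 < G t /\ r * G t < G (t * 2)).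
  { intros t Ht; specialize (HT0 t ltac:(lra)); apply Rabs_lt_between in HT0.
    assert (G t <= G (t * 2)) by (apply G_nondecr; lra).
    destruct (Rtotal_order (G t) 0) as [Hn|[Hz|Hp]].
    - exfalso; assert (E : G (t * 2) = G (t * 2) / G t * G t) by (field; lra).
      set (q := G (t * 2) / G t) in *; unfold r in *; nra.
    - exfalso; unfold Rdiv in HT0; rewrite Hz, Rinv_0 in HT0; lra.
    - assert (E : G (t * 2) = G (t * 2) / G t * G t) by (field; lra).
      set (q := G (t * 2) / G t) in *; unfold r in *; split; nra. }
  exists T, ((r - 1) * G T); split; auto.
  destruct (Hgrow T (Rle_refl _)) as [HGT _]; split; [unfold r; nra|].
  intros t Ht; destruct (Hgrow t Ht) as [Hpos Hlt].
  assert (G T <= G t) by (apply G_nondecr; lra); unfold r in *; nra.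
Qed.

(* Each doubling of [x] multiplies [x ^ n] by [2 ^ n] and [exp (- b * G x)] by at most
   [exp (- b * d)]. *)
Lemma pow_exp_le_of_doubling (n : nat) T d b : 0 < T -> 0 <= b ->
  (forall t, T <= t -> G t + d <= G (t * 2)) -> 2 ^ n <= exp (b * d) ->
  forall x, T <= x -> x ^ n * exp (- b * G x) <= (2 * T) ^ n * exp (- b * G T).
Proof.
  intros HT Hb Hdouble Hbd.
  assert (Hbase : forall x, T <= x <= 2 * T ->
            x ^ n * exp (- b * G x) <= (2 * T) ^ n * exp (- b * G T)).
  { intros x Hx; apply Rmult_le_compat; try apply pow_le; try lra.
    - apply Rlt_le, exp_pos.
    - apply pow_incr; lra.
    - apply exp_le_exp_of_le; assert (G T <= G x) by (apply G_nondecr; lra); nra. }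
  assert (Hind : forall k x, T <= x <= INR (S k) * T ->
            x ^ n * exp (- b * G x) <= (2 * T) ^ n * exp (- b * G T)).
  { induction k as [|k IH]; intros x Hx.
    - apply Hbase; simpl in Hx; lra.
    - destruct (Rle_dec x (2 * T)) as [Hle|Hgt]; [apply Hbase; lra|].
      set (y := x / 2).
      assert (Hy : T <= y <= INR (S k) * T).
      { apply Rnot_le_lt in Hgt; rewrite !S_INR in Hx; rewrite S_INR.
        pose proof (pos_INR k); unfold y; split; nra. }
      assert (Ex : x = y * 2) by (unfold y; field).
      assert (HGxy : G y + d <= G x) by (rewrite Ex; apply Hdouble; lra).
      assert (exp (- b * G x) * 2 ^ n <= exp (- b * G y)).
      { apply Rle_trans with (exp (- b * G x) * exp (b * d)).
        - apply Rmult_le_compat_l; [apply Rlt_le, exp_pos|auto].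
        - rewrite <- exp_plus; apply exp_le_exp_of_le; nra. }
      assert (0 <= y ^ n) by (apply pow_le; lra).
      eapply Rle_trans; [|apply (IH y Hy)].
      replace (x ^ n) with (y ^ n * 2 ^ n) by (rewrite Ex; symmetry; apply Rpow_mult_distr).
      rewrite Rmult_assoc, (Rmult_comm (2 ^ n)); apply Rmult_le_compat_l; auto. }
  intros x Hx; destruct (INR_unbounded (x / T)) as [k Hk].
  apply (Hind k); split; auto; rewrite S_INR.
  assert (x / T * T = x) by (field; lra); nra.
Qed.

Lemma tail_weight_le l : 1 < l -> is_lim (fun t => G (t * 2) / G t) p_infty l ->
  exists T c, 1 <= T /\ 0 < c /\ forall b x, c <= b -> T <= x ->
    (1 + x ^ 2) ^ 3 * exp (- b * G x) <= 8 * (2 * T) ^ 6 * exp (- b * G T).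
Proof.
  intros Hl Hlim; destruct (doubling_gap l Hl Hlim) as (T & d & HT & Hd & Hdouble).
  exists T, (64 / d); repeat split; auto; [apply Rdiv_lt_0_compat; lra|].
  intros b x Hb Hx.
  assert (Hbd : 64 <= b * d)
    by (apply (Rmult_le_compat_r d) in Hb; [|lra]; field_simplify in Hb; lra).
  assert (H26 : 2 ^ 6 <= exp (b * d)) by (pose proof (exp_ineq1_le (b * d)); simpl; lra).
  assert (Hc : 0 <= b) by (pose proof (Rdiv_lt_0_compat 64 d ltac:(lra) Hd); lra).
  pose proof (pow_exp_le_of_doubling 6 T d b ltac:(lra) Hc Hdouble H26 x Hx) as Hxn.
  assert ((1 + x ^ 2) ^ 3 <= 8 * x ^ 6).
  { replace (8 * x ^ 6) with ((2 * x ^ 2) ^ 3) by ring; apply pow_incr; nra. }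
  pose proof (exp_pos (- b * G x)).
  rewrite Rmult_assoc; apply Rle_trans with (8 * (x ^ 6 * exp (- b * G x))); nra.
Qed.

End DoublingTail.

Lemma is_lim_m_infty_reflect (F : R -> R) l :
  is_lim F m_infty l -> is_lim (fun t => F (- t)) p_infty l.
Proof.
  intros HF; apply (is_lim_comp F Ropp p_infty l m_infty HF).
  - exact (is_lim_opp _ _ _ (is_lim_id p_infty)).
  - exists 0; intros; discriminate.
Qed.

Lemma tail_weight_bounded (h : R -> R) l : 1 < l ->
  (forall x y, 0 <= x <= y -> h y <= h x) -> (forall x y, x <= y <= 0 -> h x <= h y) ->
  is_lim (fun t => - h (t * 2) / - h t) p_infty l ->
  is_lim (fun t => - h (t * 2) / - h t) m_infty l ->
  exists b K, 0 < b /\ forall x, (1 + x ^ 2) ^ 3 * exp (b * h x) <= K.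
Proof.
  intros Hl Hdecr Hincr Lp Lm.
  destruct (tail_weight_le (fun t => - h t)
              ltac:(intros x y Hxy; specialize (Hdecr x y Hxy); lra) l Hl Lp)
    as (T1 & c1 & HT1 & Hc1 & Hright).
  destruct (tail_weight_le (fun t => - h (- t))
              ltac:(intros x y Hxy; specialize (Hincr (- y) (- x) ltac:(lra)); lra) l Hl
              ltac:(eapply is_lim_ext; [|exact (is_lim_m_infty_reflect _ _ Lm)];
                    intros t; cbv beta; replace (- t * 2) with (- (t * 2)) by ring; auto))
    as (T2 & c2 & HT2 & Hc2 & Hleft).
  set (b := Rmax c1 c2); set (T := Rmax T1 T2).
  assert (Hb1 : c1 <= b) by apply Rmax_l; assert (Hb2 : c2 <= b) by apply Rmax_r.
  assert (T1 <= T) by apply Rmax_l; assert (T2 <= T) by apply Rmax_r.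
  set (K0 := (1 + T ^ 2) ^ 3 * exp (b * h 0)).
  set (K1 := 8 * (2 * T1) ^ 6 * exp (- b * - h T1)).
  set (K2 := 8 * (2 * T2) ^ 6 * exp (- b * - h (- T2))).
  assert (HK0 := Rmax_l K0 (Rmax K1 K2)).
  assert (HK1 := Rle_trans _ _ _ (Rmax_l K1 K2) (Rmax_r K0 (Rmax K1 K2))).
  assert (HK2 := Rle_trans _ _ _ (Rmax_r K1 K2) (Rmax_r K0 (Rmax K1 K2))).
  exists b, (Rmax K0 (Rmax K1 K2)); split; [lra|].
  intros x; destruct (Rle_dec x T1) as [Hx1|Hx1]; [destruct (Rle_dec (- T2) x) as [Hx2|Hx2]|].
  - assert (Hmax : h x <= h 0)
      by (destruct (Rle_dec 0 x); [apply Hdecr|apply Hincr]; lra).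
    eapply Rle_trans; [|exact HK0].
    apply Rmult_le_compat; [apply pow_le; nra|apply Rlt_le, exp_pos| |].
    + apply pow_incr; split; [nra|]; apply Rplus_le_compat_l.
      rewrite <- (pow2_abs x); apply pow_incr; split; [apply Rabs_pos|apply Rabs_le; lra].
    + apply exp_le_exp_of_le, Rmult_le_compat_l; lra.
  - specialize (Hleft b (- x) Hb2 ltac:(lra)); cbv beta in Hleft.
    rewrite Ropp_involutive in Hleft; replace ((- x) ^ 2) with (x ^ 2) in Hleft by ring.
    replace (- b * - h x) with (b * h x) in Hleft by ring; fold K2 in Hleft; lra.
  - specialize (Hright b x Hb1 ltac:(lra)); cbv beta in Hright.
    replace (- b * - h x) with (b * h x) in Hright by ring; fold K1 in Hright; lra.
Qed.

(** * A uniform bound on the Laplace weight *)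

Lemma pow3_le_exp y c : 0 <= y -> 0 < c -> (1 + y) ^ 3 <= (1 + 3 / c) ^ 3 * exp (c * y).
Proof.
  intros Hy Hc.
  replace (exp (c * y)) with (exp (c * y / 3) ^ 3)
    by (simpl; rewrite Rmult_1_r, <- !exp_plus; f_equal; field).
  rewrite <- Rpow_mult_distr; apply pow_incr; split; [lra|].
  pose proof (exp_ineq1_le (c * y / 3)).
  assert (0 <= 3 / c) by (apply Rlt_le, Rdiv_lt_0_compat; lra).
  assert (3 / c * (c * y / 3) = y) by (field; lra).
  apply Rle_trans with ((1 + 3 / c) * (1 + c * y / 3)); [nra|].
  apply Rmult_le_compat_l; lra.
Qed.

Lemma exp_mult_exp_opp_le (P c K : R) : P <= K * exp c -> P * exp (- c) <= K.
Proof.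
  intros HP; apply Rle_trans with (K * exp c * exp (- c)).
  - apply Rmult_le_compat_r; [apply Rlt_le, exp_pos|auto].
  - rewrite Rmult_assoc, <- exp_plus, Rplus_opp_r, exp_0; lra.
Qed.

Lemma near_weight_le (h : R -> R) a beta x : 0 < a -> 0 <= beta ->
  h x - h 0 <= - a * x ^ 2 -> (1 + beta * x ^ 2) ^ 3 * exp (beta * (h x - h 0)) <= (1 + 3 / a) ^ 3.
Proof.
  intros Ha Hb Hnear.
  assert (Hy : 0 <= beta * x ^ 2) by (pose proof (pow2_ge_0 x); nra).
  apply Rle_trans with ((1 + beta * x ^ 2) ^ 3 * exp (- (a * (beta * x ^ 2)))).
  - apply Rmult_le_compat_l; [apply pow_le; lra|]; apply exp_le_exp_of_le; nra.
  - apply exp_mult_exp_opp_le, pow3_le_exp; auto.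
Qed.

(* Away from [0] the factor [exp (- beta * s)] absorbs [beta ^ 3], and the tail bound at the
   fixed exponent [b0] absorbs [(1 + x ^ 2) ^ 3]. *)
Lemma far_weight_le (h : R -> R) s b0 Kt beta x : 0 < s -> b0 <= beta -> 1 <= beta ->
  h x - h 0 <= - s -> (1 + x ^ 2) ^ 3 * exp (b0 * h x) <= Kt ->
  (1 + beta * x ^ 2) ^ 3 * exp (beta * (h x - h 0)) <=
  Kt * exp (b0 * (s - h 0)) * (1 + 3 / s) ^ 3.
Proof.
  intros Hs Hbb Hb1 Hfar Htail.
  assert (Hexp : exp (beta * (h x - h 0)) <=
                 exp (b0 * h x) * exp (b0 * (s - h 0)) * exp (- (s * beta))).
  { rewrite <- !exp_plus; apply exp_le_exp_of_le.
    assert ((beta - b0) * (h x - h 0) <= (beta - b0) * (- s)) by (apply Rmult_le_compat_l; lra).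
    nra. }
  assert (Hpoly : (1 + beta * x ^ 2) ^ 3 <= beta ^ 3 * (1 + x ^ 2) ^ 3)
    by (rewrite <- Rpow_mult_distr; apply pow_incr; pose proof (pow2_ge_0 x); nra).
  assert (Hbeta3 : beta ^ 3 * exp (- (s * beta)) <= (1 + 3 / s) ^ 3).
  { apply exp_mult_exp_opp_le; eapply Rle_trans; [|apply pow3_le_exp; lra].
    apply pow_incr; lra. }
  assert (0 <= (1 + x ^ 2) ^ 3) by (apply pow_le; pose proof (pow2_ge_0 x); lra).
  pose proof (exp_pos (b0 * h x)); pose proof (exp_pos (b0 * (s - h 0))).
  pose proof (exp_pos (- (s * beta))); pose proof (exp_pos (beta * (h x - h 0))).
  apply Rle_trans with ((1 + x ^ 2) ^ 3 * exp (b0 * h x) * exp (b0 * (s - h 0)) *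
                        (beta ^ 3 * exp (- (s * beta)))).
  - replace ((1 + x ^ 2) ^ 3 * exp (b0 * h x) * exp (b0 * (s - h 0)) *
             (beta ^ 3 * exp (- (s * beta))))
      with (beta ^ 3 * (1 + x ^ 2) ^ 3 *
            (exp (b0 * h x) * exp (b0 * (s - h 0)) * exp (- (s * beta)))) by ring.
    apply Rmult_le_compat; auto; [apply pow_le; pose proof (pow2_ge_0 x); nra|lra].
  - apply Rmult_le_compat; [nra|apply Rmult_le_pos; [apply pow_le|]; lra| |auto].
    apply Rmult_le_compat_r; lra.
Qed.

Lemma unimodal_far_le (h : R -> R) delta a : 0 < delta ->
  (forall x y, 0 <= x <= y -> h y <= h x) -> (forall x y, x <= y <= 0 -> h x <= h y) ->
  (forall x, Rabs x <= delta -> h x - h 0 <= - a * x ^ 2) ->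
  forall x, delta <= Rabs x -> h x - h 0 <= - (a * delta ^ 2).
Proof.
  intros Hd Hdecr Hincr Hnear x Hx.
  destruct (Rle_dec 0 x) as [Hx0|Hx0].
  - rewrite Rabs_right in Hx by lra.
    assert (h x <= h delta) by (apply Hdecr; lra).
    specialize (Hnear delta ltac:(rewrite Rabs_right; lra)); lra.
  - rewrite Rabs_left in Hx by lra.
    assert (h x <= h (- delta)) by (apply Hincr; lra).
    specialize (Hnear (- delta) ltac:(rewrite Rabs_Ropp, Rabs_right; lra)).
    replace ((- delta) ^ 2) with (delta ^ 2) in Hnear by ring; lra.
Qed.

Lemma uniform_weight_bound (h : R -> R) delta a s b0 Kt :
  0 < a -> 0 < s ->
  (forall x, Rabs x <= delta -> h x - h 0 <= - a * x ^ 2) ->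
  (forall x, delta <= Rabs x -> h x - h 0 <= - s) ->
  (forall x, (1 + x ^ 2) ^ 3 * exp (b0 * h x) <= Kt) ->
  exists K b1, 1 <= b1 /\ 0 < K /\ forall beta x, b1 <= beta ->
    (1 + beta * x ^ 2) ^ 3 * exp (beta * (h x - h 0)) <= K.
Proof.
  intros Ha Hs Hnear Hfar Htail.
  set (K1 := (1 + 3 / a) ^ 3); set (K2 := Kt * exp (b0 * (s - h 0)) * (1 + 3 / s) ^ 3).
  assert (HK1 : 0 < K1)
    by (unfold K1; apply pow_lt; pose proof (Rdiv_lt_0_compat 3 a ltac:(lra) Ha); lra).
  exists (Rmax K1 K2), (Rmax 1 b0); split; [apply Rmax_l|].
  split; [eapply Rlt_le_trans; [exact HK1|apply Rmax_l]|].
  intros beta x Hbeta.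
  assert (Hb1 : 1 <= beta) by (eapply Rle_trans; [apply Rmax_l|exact Hbeta]).
  assert (Hbb : b0 <= beta) by (eapply Rle_trans; [apply Rmax_r|exact Hbeta]).
  destruct (Rle_dec (Rabs x) delta) as [Hn|Hf].
  - eapply Rle_trans; [exact (near_weight_le h a beta x Ha ltac:(lra) (Hnear x Hn))|].
    apply Rmax_l.
  - eapply Rle_trans; [|apply Rmax_r].
    exact (far_weight_le h s b0 Kt beta x Hs Hbb Hb1 (Hfar x ltac:(lra)) (Htail x)).
Qed.

(** * The Laplace-type estimate *)

Lemma mul_le_div_of_weight_le p q e y K : 0 < q -> 0 <= y -> 0 <= e -> 0 <= p ->
  p * q <= (1 + y) ^ 2 -> (1 + y) ^ 3 * e <= K -> p * e <= K / q / (1 + y).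
Proof.
  intros Hq Hy He Hp Hpq HK.
  assert (p * e * (q * (1 + y)) <= K); [|apply (Rmult_le_reg_r (q * (1 + y))); [nra|]].
  - apply Rle_trans with ((1 + y) ^ 3 * e); auto.
    replace (p * e * (q * (1 + y))) with (p * q * (1 + y) * e) by ring.
    replace ((1 + y) ^ 3) with ((1 + y) ^ 2 * (1 + y)) by ring.
    apply Rmult_le_compat_r; auto; apply Rmult_le_compat_r; lra.
  - replace (K / q / (1 + y) * (q * (1 + y))) with K by (field; lra); auto.
Qed.

Lemma pow3_le_one_plus_sq_sq w : 0 <= w -> w ^ 3 <= (1 + w ^ 2) ^ 2.
Proof. intros Hw; destruct (Rle_dec w 1); nra. Qed.

Lemma moment_weight_le beta x e K : 0 < beta -> 0 <= e ->
  (1 + beta * x ^ 2) ^ 3 * e <= K ->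
  Rabs x ^ 3 * e <= K / (beta * sqrt beta) / (1 + beta * x ^ 2) /\
  x ^ 4 * e <= K / beta ^ 2 / (1 + beta * x ^ 2).
Proof.
  intros Hb He HK.
  assert (Hs : 0 < sqrt beta) by (apply sqrt_lt_R0; auto).
  assert (Hs2 : sqrt beta * sqrt beta = beta) by (apply sqrt_sqrt; lra).
  assert (Hy : 0 <= beta * x ^ 2) by (pose proof (pow2_ge_0 x); nra).
  split; apply mul_le_div_of_weight_le; auto.
  - nra.
  - apply pow_le, Rabs_pos.
  - set (w := sqrt beta * Rabs x).
    assert (Hw : 0 <= w) by (unfold w; pose proof (Rabs_pos x); nra).
    assert (Hs3 : sqrt beta ^ 3 = beta * sqrt beta)
      by (replace (sqrt beta ^ 3) with (sqrt beta * sqrt beta * sqrt beta) by ring;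
          rewrite Hs2; ring).
    replace (Rabs x ^ 3 * (beta * sqrt beta)) with (w ^ 3)
      by (unfold w; rewrite Rpow_mult_distr, Hs3; ring).
    replace (beta * x ^ 2) with (w ^ 2)
      by (unfold w; rewrite Rpow_mult_distr, pow2_abs, pow2_sqrt; lra).
    apply pow3_le_one_plus_sq_sq; auto.
  - apply pow_lt; lra.
  - replace (x ^ 4) with ((x ^ 2) ^ 2) by ring; apply pow2_ge_0.
  - replace (x ^ 4 * beta ^ 2) with ((beta * x ^ 2) ^ 2) by ring.
    apply pow_incr; lra.
Qed.

Lemma Rpower_m3_2 beta : 0 < beta -> Rpower beta (- (3 / 2)) = / (beta * sqrt beta).
Proof.
  intros Hb; rewrite Rpower_Ropp; f_equal.
  replace (3 / 2) with (1 + / 2) by field.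
  rewrite Rpower_plus, Rpower_1, Rpower_sqrt; auto.
Qed.

Lemma Rpower_m_nat beta (n : nat) : 0 < beta -> Rpower beta (- INR n) = / beta ^ n.
Proof. intros Hb; rewrite Rpower_Ropp, Rpower_pow; auto. Qed.

Lemma Rabs_div_4beta_le u beta A c3 M : 0 < beta ->
  Rabs u <= A * (c3 * Rpower beta (- (3 / 2)) + M * Rpower beta (- 2)) ->
  Rabs (u / (4 * beta)) <= A / 4 * (c3 * Rpower beta (- (5 / 2)) + M * Rpower beta (- 3)).
Proof.
  intros Hb Hu.
  assert (Hinv : / beta = Rpower beta (- 1)).
  { replace (- 1) with (- INR 1) by (simpl; ring); rewrite Rpower_m_nat by auto.
    simpl; rewrite Rmult_1_r; auto. }
  replace (Rpower beta (- (5 / 2))) with (Rpower beta (- (3 / 2)) * / beta)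
    by (rewrite Hinv, <- Rpower_plus; f_equal; field).
  replace (Rpower beta (- 3)) with (Rpower beta (- 2) * / beta)
    by (rewrite Hinv, <- Rpower_plus; f_equal; ring).
  rewrite Rabs_div, (Rabs_pos_eq (4 * beta)) by lra.
  replace (A / 4 * (c3 * (Rpower beta (- (3 / 2)) * / beta) + M * (Rpower beta (- 2) * / beta)))
    with (A * (c3 * Rpower beta (- (3 / 2)) + M * Rpower beta (- 2)) / (4 * beta)) by (field; lra).
  apply Rmult_le_compat_r; auto; apply Rlt_le, Rinv_0_lt_compat; lra.
Qed.

Section LaplaceEstimate.

Variables (f : R -> R) (M : R).
Local Notation h := (hlog f).
Local Notation Rfun_integrand :=
  (fun x => x ^ 2 * Derive_n (hlog f) 2 x - x * Derive_n (hlog f) 1 x).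
Local Notation c3 := (Rabs (Derive_n (hlog f) 3 0)).

Hypothesis h_derivable : derivable_upto 4 h.
Hypothesis h4_bound : forall x, Rabs (Derive_n h 4 x) < M.
Hypothesis h1_0 : Derive_n h 1 0 = 0.

Variables (delta C K b1 : R).
Hypothesis delta_pos : 0 < delta.
Hypothesis C_nonneg : 0 <= C.
Hypothesis h_quadratic_lower : forall x, Rabs x <= delta -> - C * x ^ 2 <= h x - h 0.
Hypothesis h_weight : forall beta x, b1 <= beta ->
  (1 + beta * x ^ 2) ^ 3 * exp (beta * (h x - h 0)) <= K.

Lemma Rpower_f_eq beta x : Rpower (f x) beta = exp (beta * h 0) * exp (beta * (h x - h 0)).
Proof. unfold Rpower, hlog; rewrite <- exp_plus; f_equal; ring. Qed.

Lemma ex_derive_Derive_n_h k x : (k < 4)%nat -> ex_derive (Derive_n h k) x.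
Proof. intros Hk; eexists; apply h_is_derive; auto. Qed.

Lemma continuous_Rpower_f beta x : continuous (fun x => Rpower (f x) beta) x.
Proof.
  apply (ex_derive_continuous (K := R_AbsRing) (V := R_NormedModule)).
  apply (ex_derive_ext (fun x => exp (beta * h x))); [intros; reflexivity|].
  auto_derive; exact (ex_derive_Derive_n_h 0 x ltac:(lia)).
Qed.

Lemma continuous_Rfun_integrand beta x :
  continuous (fun x => Rfun_integrand x * Rpower (f x) beta) x.
Proof.
  apply (continuous_mult Rfun_integrand); [|apply continuous_Rpower_f].
  apply (ex_derive_continuous (K := R_AbsRing) (V := R_NormedModule)).
  assert (D2 := ex_derive_Derive_n_h 2 x ltac:(lia)).
  assert (D1 := ex_derive_Derive_n_h 1 x ltac:(lia)).
  apply (ex_derive_minus (fun x => x ^ 2 * Derive_n h 2 x) (fun x => x * Derive_n h 1 x)).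
  - apply (ex_derive_mult (fun x => x ^ 2)); auto; auto_derive; auto.
  - apply (ex_derive_mult (fun x => x)); auto; auto_derive; auto.
Qed.

Lemma weight_bound_ge_1 : 1 <= K.
Proof.
  specialize (h_weight b1 0 (Rle_refl _)).
  rewrite Rminus_diag, Rmult_0_r, exp_0 in h_weight; simpl in h_weight; lra.
Qed.

Lemma Rpower_f_le_lorentzian beta x : b1 <= beta -> 0 < beta ->
  Rpower (f x) beta <= exp (beta * h 0) * K / (1 + beta * x ^ 2).
Proof.
  intros Hb1 Hb; rewrite Rpower_f_eq.
  assert (Hy : 0 <= beta * x ^ 2) by (pose proof (pow2_ge_0 x); nra).
  pose proof (exp_pos (beta * h 0)); pose proof (exp_pos (beta * (h x - h 0))).
  assert (Hw : (1 + beta * x ^ 2) * exp (beta * (h x - h 0)) <= K).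
  { eapply Rle_trans; [|apply (h_weight beta x Hb1)].
    apply Rmult_le_compat_r; [lra|].
    replace ((1 + beta * x ^ 2) ^ 3) with ((1 + beta * x ^ 2) * (1 + beta * x ^ 2) ^ 2) by ring.
    rewrite <- (Rmult_1_r (1 + beta * x ^ 2)) at 1.
    apply Rmult_le_compat_l; [lra|]; rewrite <- (pow1 2); apply pow_incr; lra. }
  apply (Rmult_le_reg_r (1 + beta * x ^ 2)); [lra|].
  replace (exp (beta * h 0) * K / (1 + beta * x ^ 2) * (1 + beta * x ^ 2))
    with (exp (beta * h 0) * K) by (field; lra).
  rewrite Rmult_assoc; apply Rmult_le_compat_l; lra.
Qed.

Lemma Rabs_int_R_Rfun_integrand_le beta : b1 <= beta -> 0 < beta ->
  Rabs (int_R (fun x => Rfun_integrand x * Rpower (f x) beta)) <=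
  exp (beta * h 0) * (2 * K * (c3 / (beta * sqrt beta) + M / beta ^ 2)) * PI / sqrt beta.
Proof.
  intros Hb1 Hb.
  assert (HM := h4_bound_pos h M h4_bound); assert (Hc3 : 0 <= c3) by apply Rabs_pos.
  assert (HK := weight_bound_ge_1).
  assert (Hs : 0 < sqrt beta) by (apply sqrt_lt_R0; auto).
  set (E0 := exp (beta * h 0)); assert (HE0 : 0 < E0) by apply exp_pos.
  set (B := E0 * (2 * K * (c3 / (beta * sqrt beta) + M / beta ^ 2))).
  assert (HB : 0 <= B).
  { unfold B; assert (0 < beta * sqrt beta) by nra; assert (0 < beta ^ 2) by (apply pow_lt; lra).
    assert (0 <= c3 / (beta * sqrt beta)) by (apply Rdiv_le_0_compat; lra).
    assert (0 <= M / beta ^ 2) by (apply Rdiv_le_0_compat; lra).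
    apply Rmult_le_pos; [lra|]; apply Rmult_le_pos; lra. }
  apply (Rabs_int_R_le _ (fun x => B / (1 + beta * x ^ 2))).
  - intros x; apply continuous_Rfun_integrand.
  - intros x; apply (ex_derive_continuous (K := R_AbsRing) (V := R_NormedModule)).
    auto_derive; pose proof (pow2_ge_0 x); nra.
  - intros x; rewrite Rabs_mult, Rpower_f_eq; fold E0.
    set (e := exp (beta * (h x - h 0))); assert (He : 0 < e) by apply exp_pos.
    rewrite (Rabs_pos_eq (E0 * e)) by (apply Rmult_le_pos; lra).
    set (y := 1 + beta * x ^ 2); assert (Hy : 0 < y) by (unfold y; pose proof (pow2_ge_0 x); nra).
    destruct (moment_weight_le beta x e K Hb (Rlt_le _ _ He) (h_weight beta x Hb1)) as [H3 H4].
    fold y in H3, H4.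
    apply Rle_trans with (2 * (c3 * Rabs x ^ 3 + M * x ^ 4) * (E0 * e)).
    { apply Rmult_le_compat_r; [apply Rmult_le_pos; lra|].
      apply (Rabs_Rfun_integrand_le h M h_derivable h4_bound h1_0). }
    replace (2 * (c3 * Rabs x ^ 3 + M * x ^ 4) * (E0 * e))
      with (2 * E0 * (c3 * (Rabs x ^ 3 * e) + M * (x ^ 4 * e))) by ring.
    replace (B / y) with (2 * E0 * (c3 * (K / (beta * sqrt beta) / y) + M * (K / beta ^ 2 / y)))
      by (unfold B; field; repeat split; lra).
    apply Rmult_le_compat_l; [lra|].
    apply Rplus_le_compat; apply Rmult_le_compat_l; lra.
  - intros a b Hab; apply RInt_lorentzian_le; auto.
Qed.

Lemma RInt_Rpower_f_le beta a b : b1 <= beta -> 0 < beta -> a <= b ->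
  RInt (fun x => Rpower (f x) beta) a b <= exp (beta * h 0) * K * PI / sqrt beta.
Proof.
  intros Hb1 Hb Hab.
  pose proof (exp_pos (beta * h 0)); assert (HK := weight_bound_ge_1).
  apply Rle_trans with (RInt (fun x => exp (beta * h 0) * K / (1 + beta * x ^ 2)) a b).
  - apply RInt_le; auto; try (apply ex_RInt_continuous_R; intros x).
    + apply continuous_Rpower_f.
    + apply (ex_derive_continuous (K := R_AbsRing) (V := R_NormedModule)).
      auto_derive; pose proof (pow2_ge_0 x); nra.
    + intros x _; apply Rpower_f_le_lorentzian; auto.
  - apply RInt_lorentzian_le; auto; apply Rmult_le_pos; lra.
Qed.

Lemma int_R_Rpower_f_ge beta : b1 <= beta -> / delta ^ 2 <= beta -> 0 < beta ->
  2 * exp (beta * h 0) * exp (- C) / sqrt beta <= int_R (fun x => Rpower (f x) beta).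
Proof.
  intros Hb1 Hbd Hb.
  set (E0 := exp (beta * h 0)); assert (HE0 : 0 < E0) by apply exp_pos.
  destruct (int_R_nonneg (fun x => Rpower (f x) beta) (E0 * K * PI / sqrt beta))
    as (_ & _ & Hpartial).
  { intros x; apply Rlt_le, exp_pos. }
  { apply continuous_Rpower_f. }
  { intros a b Hab; apply RInt_Rpower_f_le; auto. }
  set (u := / sqrt beta).
  assert (Hu : 0 < u) by (apply Rinv_0_lt_compat, sqrt_lt_R0; auto).
  assert (Hbu : beta * u ^ 2 = 1) by (unfold u; rewrite pow_inv, pow2_sqrt; [field|]; lra).
  assert (Hud : u <= delta).
  { rewrite <- (Rinv_inv delta); apply Rinv_le_contravar; [apply Rinv_0_lt_compat; lra|].
    rewrite <- (sqrt_pow2 (/ delta)) by (apply Rlt_le, Rinv_0_lt_compat; lra).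
    apply sqrt_le_1_alt; rewrite pow_inv; auto. }
  apply Rle_trans with (RInt (fun x => Rpower (f x) beta) (- u) u); [|apply Hpartial; lra].
  apply Rle_trans with (RInt (fun _ => E0 * exp (- C)) (- u) u).
  { rewrite RInt_const; unfold scal; simpl; unfold mult; simpl; unfold u; lra. }
  apply RInt_le; try lra; try (apply ex_RInt_continuous_R; intros x).
  - apply continuous_const.
  - apply continuous_Rpower_f.
  - intros x Hx; rewrite Rpower_f_eq; fold E0.
    apply Rmult_le_compat_l; [lra|]; apply exp_le_exp_of_le.
    assert (Hxu : Rabs x <= u) by (apply Rabs_le; lra).
    specialize (h_quadratic_lower x ltac:(lra)).
    assert (x ^ 2 <= u ^ 2)
      by (rewrite <- pow2_abs; apply pow_incr; split; [apply Rabs_pos|auto]).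
    assert (beta * x ^ 2 <= 1) by (rewrite <- Hbu; apply Rmult_le_compat_l; lra).
    pose proof (pow2_ge_0 x); nra.
Qed.

Lemma Rabs_Rfun_le beta : b1 <= beta -> / delta ^ 2 <= beta -> 0 < beta ->
  Rabs (Rfun f beta) <=
  K * PI * exp C * (c3 * Rpower beta (- (3 / 2)) + M * Rpower beta (- 2)).
Proof.
  intros Hb1 Hbd Hb.
  assert (Hs : 0 < sqrt beta) by (apply sqrt_lt_R0; auto).
  pose proof (exp_pos (beta * h 0)); pose proof (exp_pos (- C)); pose proof PI_RGT_0.
  pose proof (Rabs_int_R_Rfun_integrand_le beta Hb1 Hb) as HN.
  pose proof (int_R_Rpower_f_ge beta Hb1 Hbd Hb) as HD.
  assert (HDpos : 0 < int_R (fun x => Rpower (f x) beta)).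
  { eapply Rlt_le_trans; [|exact HD].
    apply Rdiv_lt_0_compat; auto; apply Rmult_lt_0_compat; lra. }
  unfold Rfun, Ebeta.
  set (D := int_R (fun x => Rpower (f x) beta)) in *.
  set (N := int_R (fun x => Rfun_integrand x * Rpower (f x) beta)) in *.
  replace (- 2) with (- INR 2) by (simpl; ring).
  rewrite Rpower_m3_2, Rpower_m_nat by auto.
  unfold Rdiv at 1; rewrite Rabs_mult, Rabs_inv, (Rabs_pos_eq D) by lra.
  eapply Rle_trans.
  { apply Rmult_le_compat; [apply Rabs_pos|apply Rlt_le, Rinv_0_lt_compat; auto|exact HN|].
    apply Rinv_le_contravar; [|exact HD].
    apply Rdiv_lt_0_compat; auto; apply Rmult_lt_0_compat; lra. }
  right; rewrite exp_Ropp; field.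
  pose proof (exp_pos C); repeat split; lra.
Qed.

Lemma Rabs_Rfun_div_4beta_le beta : b1 <= beta -> / delta ^ 2 <= beta -> 0 < beta ->
  Rabs (Rfun f beta / (4 * beta)) <=
  K * PI * exp C / 4 * (c3 * Rpower beta (- (5 / 2)) + M * Rpower beta (- 3)).
Proof. intros Hb1 Hbd Hb; apply Rabs_div_4beta_le; auto; apply Rabs_Rfun_le; auto. Qed.

End LaplaceEstimate.

Lemma bigO_Rpower_of_le (u : R -> R) A e beta0 :
  (forall beta, beta0 <= beta -> Rabs (u beta) <= A * Rpower beta e) ->
  bigO_infty u (fun beta => Rpower beta e).
Proof.
  intros Hu; exists A, beta0; intros beta Hb.
  rewrite (Rabs_pos_eq (Rpower beta e)) by (apply Rlt_le, exp_pos); auto.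
Qed.

Lemma bigO_of_Rpower_bound (u : R -> R) A c M beta0 : 0 <= A -> 0 <= c -> 1 <= beta0 ->
  (forall beta, beta0 <= beta ->
     Rabs (u beta) <= A * (c * Rpower beta (- (5 / 2)) + M * Rpower beta (- 3))) ->
  bigO_infty u (fun beta => Rpower beta (- (5 / 2))) /\
  (c = 0 -> bigO_infty u (fun beta => Rpower beta (- 3))).
Proof.
  intros HA Hc Hbeta0 Hu; split; [|intros ->].
  - apply (bigO_Rpower_of_le _ (A * (c + Rabs M)) _ beta0); intros beta Hbeta.
    assert (Rpower beta (- 3) <= Rpower beta (- (5 / 2))) by (apply Rle_Rpower; lra).
    assert (M * Rpower beta (- 3) <= Rabs M * Rpower beta (- (5 / 2))).
    { apply Rle_trans with (Rabs M * Rpower beta (- 3)).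
      - apply Rmult_le_compat_r; [apply Rlt_le, exp_pos|apply Rle_abs].
      - apply Rmult_le_compat_l; [apply Rabs_pos|auto]. }
    eapply Rle_trans; [apply Hu; auto|].
    rewrite (Rmult_assoc A); apply Rmult_le_compat_l; lra.
  - apply (bigO_Rpower_of_le _ (A * M) _ beta0); intros beta Hbeta.
    eapply Rle_trans; [apply Hu; auto|]; right; ring.
Qed.

Lemma hlog_monotone f : (forall x, 0 < f x) -> unimodal_at0 f ->
  (forall x y, 0 <= x <= y -> hlog f y <= hlog f x) /\
  (forall x y, x <= y <= 0 -> hlog f x <= hlog f y).
Proof. intros f_pos [f_incr f_decr]; split; intros; apply ln_le; auto. Qed.

Lemma Derive1_0_of_unimodal (h : R -> R) : derivable_upto 4 h ->
  (forall x y, 0 <= x <= y -> h y <= h x) -> (forall x y, x <= y <= 0 -> h x <= h y) ->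
  Derive_n h 1 0 = 0.
Proof.
  intros h_der h_decr h_incr.
  apply (is_derive_at_max_eq0 h); [|exact (h_is_derive _ h_der 0 0 ltac:(lia))].
  intros x; destruct (Rle_dec 0 x); [apply h_decr|apply h_incr]; lra.
Qed.

Lemma laplace_weight_bounds (h : R -> R) M l :
  derivable_upto 4 h -> (forall x, Rabs (Derive_n h 4 x) < M) ->
  Derive_n h 1 0 = 0 -> Derive_n h 2 0 < 0 ->
  (forall x y, 0 <= x <= y -> h y <= h x) -> (forall x y, x <= y <= 0 -> h x <= h y) ->
  1 < l -> is_lim (fun t => - h (t * 2) / - h t) p_infty l ->
  is_lim (fun t => - h (t * 2) / - h t) m_infty l ->
  exists delta C K b1, 0 < delta /\ 0 <= C /\ 0 < K /\ 1 <= b1 /\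
    (forall x, Rabs x <= delta -> - C * x ^ 2 <= h x - h 0) /\
    (forall beta x, b1 <= beta -> (1 + beta * x ^ 2) ^ 3 * exp (beta * (h x - h 0)) <= K).
Proof.
  intros h_der h4_bound h1_0 h2_neg h_decr h_incr Hl Lp Lm.
  destruct (h_quadratic_near0 _ M h_der h4_bound h1_0 h2_neg)
    as (delta & a & C & Hd & Ha & HC & Hnear).
  destruct (tail_weight_bounded h _ Hl h_decr h_incr Lp Lm) as (b0 & Kt & _ & Htail).
  assert (Hupper : forall x, Rabs x <= delta -> h x - h 0 <= - a * x ^ 2)
    by (intros x Hx; apply Hnear; auto).
  assert (Hs : 0 < a * delta ^ 2) by (apply Rmult_lt_0_compat; [|apply pow_lt]; lra).
  destruct (uniform_weight_bound h delta a _ b0 Kt Ha Hs Hupper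
              (unimodal_far_le _ delta a Hd h_decr h_incr Hupper) Htail)
    as (K & b1 & Hb1 & HK & Hweight).
  exists delta, C, K, b1; repeat split; auto; [lra|intros x Hx; apply Hnear; auto].
Qed.

Theorem lemma5 (f : R -> R) (alpha M : R)
  (f_pos : forall x : R, 0 < f x)
  (f_C4 : C4 f)
  (f_unimodal : unimodal_at0 f)
  (alpha_pos : 0 < alpha)
  (H_regvar : regularly_varying (fun x => - ln (f x)) alpha)
  (M_pos : 0 < M)
  (h4_bound : forall x : R, Rabs (Derive_n (hlog f) 4 x) < M)
  (h2_neg : Derive_n (hlog f) 2 0 < 0)
  (var_hyp : exists gamma : R, 0 < gamma /\
     bigO_infty (fun beta => VarY2 f beta - 2) (fun beta => Rpower beta (- gamma))) :
  bigO_infty (fun beta => Rfun f beta / (4 * beta)) (fun beta => Rpower beta (- (5 / 2))) /\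
  (Derive_n (hlog f) 3 0 = 0 ->
   bigO_infty (fun beta => Rfun f beta / (4 * beta)) (fun beta => Rpower beta (- 3))).
Proof.
  (* The Laplace-type estimates below do not need the variance hypothesis. *)
  clear var_hyp.
  assert (h_der := derivable_upto_hlog f f_pos f_C4).
  destruct (hlog_monotone f f_pos f_unimodal) as [h_decr h_incr].
  assert (h1_0 := Derive1_0_of_unimodal _ h_der h_decr h_incr).
  assert (H2 : 1 < Rpower 2 alpha) by (rewrite <- (Rpower_O 2) at 1 by lra; apply Rpower_lt; lra).
  destruct (H_regvar 2 ltac:(lra)) as [Lp Lm].
  destruct (laplace_weight_bounds (hlog f) M _ h_der h4_bound h1_0 h2_neg h_decr h_incr H2 Lp Lm)
    as (delta & C & K & b1 & Hd & HC & HK & Hb1 & Hlower & Hweight).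
  set (c3 := Rabs (Derive_n (hlog f) 3 0)); set (A := K * PI * exp C / 4).
  assert (HA : 0 <= A).
  { pose proof PI_RGT_0; pose proof (exp_pos C); unfold A.
    apply Rdiv_le_0_compat; [apply Rmult_le_pos; [apply Rmult_le_pos|]|]; lra. }
  assert (Hbound : forall beta, Rmax b1 (/ delta ^ 2) <= beta ->
            Rabs (Rfun f beta / (4 * beta)) <=
            A * (c3 * Rpower beta (- (5 / 2)) + M * Rpower beta (- 3))).
  { intros beta Hbeta; pose proof (Rmax_l b1 (/ delta ^ 2)); pose proof (Rmax_r b1 (/ delta ^ 2)).
    apply (Rabs_Rfun_div_4beta_le f M h_der h4_bound h1_0 delta C K b1); auto; lra. }
  destruct (bigO_of_Rpower_bound _ A c3 M (Rmax b1 (/ delta ^ 2)) HA (Rabs_pos _)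
              (Rle_trans _ _ _ Hb1 (Rmax_l _ _)) Hbound) as [Hbig52 Hbig3].
  split; auto; intros H3; apply Hbig3; unfold c3; rewrite H3; apply Rabs_R0.
Qed.
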